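(* Let $k\ge 2$ and $r\ge 0$ be integers, and let $\vec m=(m_0,\dots,m_r)$ be a vector of nonnegative integers with at least one positive entry. Then \[ V(\vec m)\le k\log_{b(k)} W(\vec m),\qquad\text{where } b(k)=\frac{k^k}{(k-1)^{k-1}},\quad W(\vec m)=\sum_{i=0}^r m_i k^{2i}. \]
   Context: Let $N=\sum_i m_i$, $\mathcal{Y}=\{1,\dots,k\}$, $\mathcal{X}=[k]^N$, and experts $h_j(x)=x_j$, $j=1,\dots,N$, where $m_i$ of the experts are assigned budget $B(h_j)=i$. Let $\mathcal{P}_{\vec m}$ be the set of finite sequences of examples in $\mathcal{X}\times\mathcal{Y}$ for which some $h_j$ errs ($h_j(x)\ne y$) on at most $B(h_j)$ examples. $V(\vec m)=\mathsf{opt}_{\operatorname{bandit}}^{\operatorname{adap}}(\mathcal{P}_{\vec m})$, defined as follows. Bandit feedback game: each round an adaptive adversary chooses $x_t$ from the history; the learner chooses a distribution $\pi^{(t)}$ on $\mathcal{Y}$ (from history and $x_t$); the adversary, seeing $\pi^{(t)}$, chooses a distribution $\tau^{(t)}$; $\hat y_t\sim\pi^{(t)}$, $y_t\sim\tau^{(t)}$; the learner learns only whether $\hat y_t=y_t$. The adversary must ensure that whenever the history is realizable, every $y_t$ in the support of $\tau^{(t)}$ keeps it realizable, where a history of (instance, correct/incorrect, prediction) triples is realizable if some choice of true labels agreeing with the observations gives a sequence in $\mathcal{P}_{\vec m}$. $\mathsf{opt}_{\operatorname{bandit}}^{\operatorname{adap}}=\inf_{\text{learner}}\sup_{\text{adversary}}$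 expected number of mistakes ($\hat y_t\ne y_t$). *)

From HB Require Import structures.
From mathcomp Require Import all_boot all_order all_algebra.
From mathcomp Require Import all_classical all_reals all_analysis.
Set Implicit Arguments. Unset Strict Implicit. Unset Printing Implicit Defensive.
Import Order.TTheory GRing.Theory Num.Theory.
Local Open Scope ring_scope.
Local Open Scope classical_set_scope.

(* Labels Y = {1,...,k} are represented by 'I_k = {0,...,k-1}.
   The budget vector m = (m_0,...,m_r) is a seq nat of size r+1.
   N = sum_i m_i experts, indexed by 'I_N; the instance space is X = [k]^N,
   represented as {ffun 'I_N -> 'I_k}; expert j is h_j(x) = x j.
   Experts are assigned budgets blockwise: the first m_0 experts have
   budget 0, the next m_1 have budget 1, etc. *)

Fixpoint budget (m : seq nat) (j : nat) : nat :=
  match m with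
  | [::] => 0%N
  | a :: m' => if (j < a)%N then 0%N else (budget m' (j - a)).+1
  end.

Definition nexp (m : seq nat) : nat := sumn m.

Definition inst (k : nat) (m : seq nat) := {ffun 'I_(nexp m) -> 'I_k}.

Definition inP (k : nat) (m : seq nat) (s : seq (inst k m * 'I_k)) : bool :=
  [exists j : 'I_(nexp m),
     (count (fun e : inst k m * 'I_k => e.1 j != e.2) s <= budget m j)%N].

(* bandit histories: (instance, correct?, prediction) triples *)
Definition hist (k : nat) (m : seq nat) := seq (inst k m * bool * 'I_k).

Definition agrees (k : nat) (m : seq nat) (h : hist k m) (ys : seq 'I_k) : bool :=
  (size ys == size h) &&
  all (fun p => let: ((x, b, yh), y) := p in (y == yh) == b) (zip h ys).

Definition realizable (k : nat) (m : seq nat) (h : hist k m) : Prop :=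
  exists ys : seq 'I_k,
    agrees h ys /\ inP (zip [seq e.1.1 | e <- h] ys).

Section Game.
Variable R : realType.
Variables (k : nat) (m : seq nat).

Definition dist := {ffun 'I_k -> R}.

Definition isdist (p : dist) : Prop :=
  (forall y, 0 <= p y) /\ \sum_(y < k) p y = 1.

Definition learner := hist k m -> inst k m -> dist.

Definition valid_learner (L : learner) : Prop :=
  forall h x, isdist (L h x).

Record adversary := Adversary {
  advX : hist k m -> inst k m;
  advY : hist k m -> inst k m -> dist -> dist }.

Definition valid_adversary (A : adversary) : Prop :=
  forall h x p, isdist p ->
    isdist (advY A h x p) /\
    (realizable h ->
      forall yh y : 'I_k, 0 < p yh -> 0 < advY A h x p y ->
        realizable (rcons h (x, yh == y, yh))).

Fixpoint emistakes (L : learner) (A : adversary) (T : nat) (h : hist k m) : R :=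
  match T with
  | 0%N => 0
  | T'.+1 =>
      let x := advX A h in
      let p := L h x in
      let q := advY A h x p in
      \sum_(yh < k) \sum_(y < k)
         p yh * q y * ((yh != y)%:R + emistakes L A T' (rcons h (x, yh == y, yh)))
  end.

(* V(m) = opt_bandit^adap(P_m) = inf_learner sup_adversary E[#mistakes];
   the adversary also chooses the (finite) number of rounds T. *)
Definition Vopt : \bar R :=
  ereal_inf [set v | exists L : learner, valid_learner L /\
     v = ereal_sup [set w | exists (A : adversary) (T : nat),
            valid_adversary A /\ w = (emistakes L A T [::])%:E]].

End Game.

Definition bk (R : realType) (k : nat) : R :=
  (k%:R ^+ k) / ((k.-1)%:R ^+ k.-1).

Definition Wm (R : realType) (k : nat) (m : seq nat) : R :=
  \sum_(i < size m) (nth 0%N m i)%:R * k%:R ^+ (2 * i).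

From HB Require Import structures.
From mathcomp Require Import all_boot all_order all_algebra.
From mathcomp Require Import all_classical all_reals all_analysis.
From mathcomp Require Import ring lra.
Import Order.TTheory GRing.Theory Num.Theory.
Local Open Scope ring_scope.
Set Implicit Arguments. Unset Strict Implicit. Unset Printing Implicit Defensive.

(* The learner tracks the potential Phi = sum_j K^(B_j - n_j) over the experts
   still within budget, where K = k^2 and n_j counts the rounds whose feedback
   refutes expert j; Phi starts at W(m) and stays >= 1 while the history is
   realizable.  If a is the share of Phi held by the experts agreeing with the
   prediction, a correct prediction multiplies Phi by at most a + (1 - a)/K and
   a wrong one by at most 1 - a + a/K.  Concavity of ln with weights
   (k-1)/k, 1/k gives, for c = k / ln b(k),
     (k - 1) (1 + c ln (1 - a + a/K)) + c ln (a + (1 - a)/K) <= 0,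
   which is exactly what is needed to find, in every round, a distribution
   whose expected number of mistakes plus expected change of c ln Phi is <= 0
   whatever the adversary's label.  Summing over the rounds, the expected
   number of mistakes is at most c ln W(m). *)

Section LnInequalities.
Variable R : realType.

Lemma ln_le_subr1 (x : R) : 0 < x -> ln x <= x - 1.
Proof. by move=> x0; have := @le_ln1Dx R (x - 1); rewrite subrKC; apply; lra. Qed.

Lemma ln_ge_1subVr (x : R) : 0 < x -> 1 - x^-1 <= ln x.
Proof.
move=> x0; have := @ln_le_subr1 x^-1; rewrite lnV ?posrE // invr_gt0; lra.
Qed.

Lemma ln_concave (t x y : R) : 0 <= t <= 1 -> 0 < x -> 0 < y ->
  t * ln x + (1 - t) * ln y <= ln (t * x + (1 - t) * y).
Proof.
by move=> /andP[t0 t1] x0 y0; have := concave_ln (Itv01 t0 t1) x0 y0.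
Qed.

End LnInequalities.

Section LogBase.
Variables (R : realType) (k : nat).
Hypothesis k_gt1 : (1 < k)%N.

Let k_gt0 : (0 < k)%N. Proof. exact: ltnW. Qed.
Let predk_gt0 : (0 < k.-1)%N. Proof. by rewrite -ltnS prednK. Qed.
Let natr_predk : k%:R = (k.-1)%:R + 1 :> R. Proof. by rewrite natr1 prednK. Qed.
Let natr_predk_ge1 : 1 <= (k.-1)%:R :> R. Proof. by rewrite ler1n. Qed.

Lemma ln_bk :
  ln (bk R k) = k%:R * ln k%:R - (k.-1)%:R * ln (k.-1)%:R.
Proof.
rewrite /bk ln_div; last 2 first.
- by rewrite posrE exprn_gt0 // ltr0n.
- by rewrite posrE exprn_gt0 // ltr0n.
by rewrite !lnXn ?ltr0n // !mulr_natl.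
Qed.

Lemma ln_bk_ge1 : 1 <= ln (bk R k).
Proof.
rewrite ln_bk; have ek := natr_predk; have N1 := natr_predk_ge1.
set N := (k.-1)%:R in ek N1 *; set K := k%:R in ek *.
have K0 : 0 < K by lra.
have lnK := ln_ge_1subVr K0.
have lnKN := ln_ge_1subVr (divr_gt0 K0 (lt_le_trans ltr01 N1)).
rewrite ln_div ?posrE ?invf_div in lnKN; [|lra|lra].
have eN : N * (1 - N / K) = N / K by rewrite ek; field; lra.
have N_KN : N * (1 - N / K) <= N * (ln K - ln N) by rewrite ler_wpM2l //; lra.
have NK : 1 / K <= N / K by rewrite ler_pM2r ?invr_gt0.
have -> : K * ln K - N * ln N = ln K + N * (ln K - ln N) by rewrite ek; ring.
rewrite eN mul1r in N_KN NK; lra.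
Qed.

Lemma ln_bk_le (a b : R) : 0 < a -> 0 < b ->
  (k.-1)%:R * ln a + ln b + ln (bk R k) <= k%:R * ln (a + b).
Proof.
move=> a0 b0; rewrite ln_bk; have ek := natr_predk; have N1 := natr_predk_ge1.
set N := (k.-1)%:R in ek N1 *; set K := k%:R in ek *.
have K0 : 0 < K by lra.
have t01 : 0 <= N / K <= 1.
  by rewrite divr_ge0 ?ler_pdivrMr //=; lra.
have x0 : 0 < a * K / N by rewrite !mulr_gt0 ?invr_gt0 //; lra.
have y0 : 0 < b * K by rewrite mulr_gt0.
have := ln_concave t01 x0 y0.
have -> : N / K * (a * K / N) + (1 - N / K) * (b * K) = a + b.
  by rewrite ek; field; lra.
move=> /(ler_wpM2l (ltW K0)); apply: le_trans.
have N0 : 0 < N by lra.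
rewrite ln_div ?lnM ?posrE ?mulr_gt0 //.
rewrite [leRHS](_ : _ = N * ln a + ln b + (K * ln K - N * ln N)) //.
by rewrite ek; field; lra.
Qed.

Definition mistake_rate : R := k%:R / ln (bk R k).

Lemma mistake_rate_ge0 : 0 <= mistake_rate.
Proof. by rewrite divr_ge0 // (le_trans ler01 ln_bk_ge1). Qed.

Lemma hedge_ineq (a b : R) : 0 < a -> 0 < b ->
  a + b <= 1 + (k%:R ^+ 2)^-1 ->
  (k.-1)%:R * (1 + mistake_rate * ln a) + mistake_rate * ln b <= 0.
Proof.
move=> a0 b0 ab.
have L1 := ln_bk_ge1; have c0 := mistake_rate_ge0; have ek := natr_predk.
set N := (k.-1)%:R in ek *; set K := k%:R in ek c0 *.
set L := ln (bk R k) in L1 c0 *; rewrite /mistake_rate -/K -/L in c0 *.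
have K0 : 0 < K by rewrite ltr0n.
have lnab : K * ln (a + b) <= K^-1.
  have -> : K^-1 = K * (K ^+ 2)^-1 by field; rewrite gt_eqF.
  rewrite ler_pM2l //; have := ln_le_subr1 (addr_gt0 a0 b0); lra.
have sum_ln : N * ln a + ln b <= K^-1 - L.
  by have := ln_bk_le a0 b0; rewrite -/N -/K -/L; lra.
have := ler_wpM2l c0 sum_ln.
have -> : K / L * (K^-1 - L) = L^-1 - K by field; rewrite !gt_eqF //; lra.
have : L^-1 <= 1 by rewrite invf_le1 //; lra.
have -> : N * (1 + K / L * ln a) + K / L * ln b = N + K / L * (N * ln a + ln b).
  by ring.
lra.
Qed.

End LogBase.

Section Hedging.
Variables (R : realType) (k : nat).
Implicit Types (U V : 'I_k -> R) (p q : dist R k).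

Definition hedges U V p := isdist p /\
  forall y, \sum_(l < k) p l * (if l == y then U l else V l) <= 0.

Definition point_dist (l0 : 'I_k) : dist R k := [ffun l => (l == l0)%:R].

Definition normalize (w : 'I_k -> R) : dist R k :=
  [ffun l => w l / \sum_(i < k) w i].

Lemma sum_pred1_natr (y : 'I_k) : \sum_(l < k) ((l == y)%:R : R) = 1.
Proof. by rewrite (bigD1 y) //= eqxx big1 ?addr0 // => l /negbTE ->. Qed.

Lemma isdist_point l0 : isdist (point_dist l0).
Proof.
split=> [l|]; first by rewrite ffunE ler0n.
by under eq_bigr do rewrite ffunE; rewrite sum_pred1_natr.
Qed.

Lemma sum_ord_gt0 (w : 'I_k -> R) : (0 < k)%N -> (forall l, 0 < w l) ->
  0 < \sum_(l < k) w l.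
Proof.
move=> k0 w0; rewrite (bigD1 (Ordinal k0)) //= ltr_pwDl ?w0 //.
by apply: sumr_ge0 => l _; exact: ltW.
Qed.

Lemma isdist_normalize (w : 'I_k -> R) : (0 < k)%N -> (forall l, 0 < w l) ->
  isdist (normalize w).
Proof.
move=> k0 w0; have S0 := sum_ord_gt0 k0 w0.
split=> [l|]; first by rewrite ffunE divr_ge0 ?ltW.
by under eq_bigr do rewrite ffunE; rewrite -mulr_suml divff ?gt_eqF.
Qed.

Lemma exists_hedging_dist U V : (0 < k)%N ->
  (forall l, U l <= 0) -> (forall l, (k.-1)%:R * V l + U l <= 0) ->
  exists p, hedges U V p.
Proof.
move=> k0 U_le0 UV_le0.
have [[l0 V_le0]|/forallNP V_gt0] := pselect (exists l, V l <= 0).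
  exists (point_dist l0); split=> [|y]; first exact: isdist_point.
  rewrite (bigD1 l0) //= ffunE eqxx mul1r big1 ?addr0.
    by case: eqP.
  by move=> l /negbTE nl; rewrite ffunE nl mul0r.
have {}V_gt0 l : 0 < V l by rewrite ltNge; apply/negP/V_gt0.
have kp : 0 < k%:R :> R by rewrite ltr0n.
have ek : k%:R = (k.-1)%:R + 1 :> R by rewrite natr1 prednK.
(* Weights proportional to 1 / (V l - U l) make the cost against any label
   equal to S^-1 (sum_l V l / (V l - U l) - 1), and each V l / (V l - U l) is
   at most 1/k. *)
pose d l := V l - U l.
have d_ge l : k%:R * V l <= d l by have := UV_le0 l; rewrite /d ek; lra.
have d_gt0 l : 0 < d l by apply: lt_le_trans (d_ge l); exact: mulr_gt0.
pose S := \sum_(l < k) (d l)^-1.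
have S_gt0 : 0 < S by apply: sum_ord_gt0 => // l; rewrite invr_gt0.
exists (normalize (fun l => (d l)^-1)); split=> [|y].
  by apply: isdist_normalize => // l; rewrite invr_gt0.
have pcost l : normalize (fun l => (d l)^-1) l * (if l == y then U l else V l)
    = S^-1 * ((d l)^-1 * V l - (l == y)%:R).
  rewrite ffunE; case: eqP => _ /=; last by ring.
  have -> : U l = V l - d l by rewrite /d; ring.
  by rewrite -/S; field; rewrite !gt_eqF ?d_gt0.
under eq_bigr do rewrite pcost.
rewrite -mulr_sumr sumrB sum_pred1_natr.
rewrite pmulr_rle0 ?invr_gt0 // subr_le0.
have -> : 1 = \sum_(l < k) (k%:R : R)^-1.
  by rewrite sumr_const card_ord -[_ *+ k]mulr_natl mulfV ?gt_eqF.
apply: ler_sum => l _; rewrite mulrC ler_pdivrMr ?d_gt0 //.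
by rewrite -(ler_pM2l kp) mulrA mulfV ?gt_eqF ?mul1r.
Qed.

Lemma hedging_round_le U V p q (f : 'I_k -> 'I_k -> R) (G : R) :
  hedges U V p -> isdist q ->
  (forall yh y, 0 < p yh -> 0 < q y ->
     f yh y <= (if yh == y then U yh else V yh) + G) ->
  \sum_(yh < k) \sum_(y < k) p yh * q y * f yh y <= G.
Proof.
move=> [[p_ge0 p_sum] p_hedge] [q_ge0 q_sum] f_le.
pose c yh y := if yh == y then U yh else V yh.
have step yh y : p yh * q y * f yh y <= p yh * q y * (c yh y + G).
  have := p_ge0 yh; rewrite le_eqVlt => /predU1P[<-|p_gt0].
    by rewrite !mul0r.
  have := q_ge0 y; rewrite le_eqVlt => /predU1P[<-|q_gt0].
    by rewrite mulr0 !mul0r.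
  by rewrite ler_pM2l ?mulr_gt0 ?f_le.
apply: le_trans (ler_sum _ (fun yh _ => ler_sum _ (fun y _ => step yh y))) _.
have -> : \sum_(yh < k) \sum_(y < k) p yh * q y * (c yh y + G) =
    \sum_(y < k) q y * (\sum_(yh < k) p yh * c yh y) +
    \sum_(y < k) q y * ((\sum_(yh < k) p yh) * G).
  rewrite exchange_big -big_split; apply: eq_bigr => y _ /=.
  rewrite mulr_suml !mulr_sumr -big_split; apply: eq_bigr => yh _ /=; ring.
rewrite p_sum mul1r -mulr_suml q_sum mul1r.
rewrite gerDr; apply: sumr_le0 => y _.
exact: mulr_ge0_le0 (q_ge0 y) (p_hedge y).
Qed.

End Hedging.

Lemma sum_exprn_budget (R : comPzSemiRingType) (z : R) (m : seq nat) :
  \sum_(j < nexp m) z ^+ budget m j = \sum_(i < size m) (nth 0%N m i)%:R * z ^+ i.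
Proof.
elim: m => [|a m IH]; first by rewrite !big_ord0.
rewrite /nexp /= big_split_ord big_ord_recl /= expr0 mulr1.
congr (_ + _).
  rewrite (eq_bigr (fun=> 1)) ?sumr_const ?card_ord // => i _.
  by rewrite /= ltn_ord.
rewrite (eq_bigr (fun i : 'I_(sumn m) => z * z ^+ budget m i)); last first.
  by move=> i _; rewrite /= ltnNge leq_addr /= addKn exprS.
rewrite -mulr_sumr [X in z * X]IH mulr_sumr; apply: eq_bigr => i _.
by rewrite exprS mulrCA.
Qed.

Section Potential.
Variables (R : realType) (k : nat) (m : seq nat).
Hypothesis k_gt1 : (1 < k)%N.
Implicit Types (h : hist k m) (x : inst k m) (j : 'I_(nexp m)).

(* Each refutation divides the weight of an expert by K.  K = k^2 is what makes
   [hedge_ineq] hold (k ln (1 + 1/K) <= 1/k), and is why W(m) weighs the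
   budget i by k^(2i). *)
Local Notation K := (k%:R ^+ 2 : R).

Definition refutes j (e : inst k m * bool * 'I_k) : bool :=
  let: (x, b, yh) := e in if b then x j != yh else x j == yh.

Definition nrefuted j h : nat := count (refutes j) h.

Definition weight j h : R :=
  if (nrefuted j h <= budget m j)%N then K ^+ (budget m j - nrefuted j h) else 0.

Definition potential h : R := \sum_j weight j h.

(* When the potential vanishes, the share is 0 (division by 0), so it always
   lies in [0, 1]: a hedging distribution then exists on every history and the
   default of [xget] below is never used. *)
Definition share h x (l : 'I_k) : R :=
  (\sum_(j | x j == l) weight j h) / potential h.

Definition hit_factor (a : R) : R := a + (1 - a) / K.
Definition miss_factor (a : R) : R := 1 - a + a / K.

Definition shrink_factor h x (yh y : 'I_k) : R :=
  if yh == y then hit_factor (share h x yh) else miss_factor (share h x yh).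

Definition hit_cost h x l : R :=
  mistake_rate R k * ln (hit_factor (share h x l)).
Definition miss_cost h x l : R :=
  1 + mistake_rate R k * ln (miss_factor (share h x l)).

Definition hedge_learner : learner R k m :=
  fun h x => xget 0 (hedges (hit_cost h x) (miss_cost h x)).

Lemma K_gt1 : 1 < K.
Proof. by rewrite -natrX ltr1n -[1%N]/(1 ^ 2)%N ltn_exp2r. Qed.

Let natrk_neq0 : k%:R != 0 :> R.
Proof. by rewrite pnatr_eq0 -lt0n ltnW. Qed.

Lemma K_gt0 : 0 < K.
Proof. exact: lt_trans ltr01 K_gt1. Qed.

Lemma invK_itv : 0 < K^-1 < 1.
Proof. by rewrite invr_gt0 invf_lt1 K_gt0 ?K_gt1. Qed.

Lemma weight_ge0 j h : 0 <= weight j h.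
Proof. by rewrite /weight; case: ifP; rewrite // exprn_ge0 // ltW // K_gt0. Qed.

Lemma potential_split h x l : potential h =
  \sum_(j | x j == l) weight j h + \sum_(j | x j != l) weight j h.
Proof. exact: bigID. Qed.

Lemma share_itv h x l : 0 <= share h x l <= 1.
Proof.
rewrite /share (potential_split h x l).
set A := \sum_(j | x j == l) _; set B := \sum_(j | x j != l) _.
have A0 : 0 <= A by apply: sumr_ge0 => j _; exact: weight_ge0.
have B0 : 0 <= B by apply: sumr_ge0 => j _; exact: weight_ge0.
rewrite divr_ge0 ?addr_ge0 //=.
have [->|AB0] := eqVneq (A + B) 0; first by rewrite invr0 mulr0.
by rewrite ler_pdivrMr ?lt_def ?AB0 ?addr_ge0 // mul1r lerDl.
Qed.

Lemma hit_factor_itv a : 0 <= a <= 1 -> K^-1 <= hit_factor a <= 1.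
Proof.
move=> /andP[a0 a1]; have /andP[Ki0 Ki1] := invK_itv.
rewrite /hit_factor; have -> : a + (1 - a) / K = K^-1 + a * (1 - K^-1) by ring.
have : 0 <= a * (1 - K^-1) by rewrite mulr_ge0 // subr_ge0 ltW.
have : a * (1 - K^-1) <= 1 - K^-1 by rewrite ler_piMl // subr_ge0 ltW.
lra.
Qed.

Lemma miss_factor_ge a : 0 <= a <= 1 -> K^-1 <= miss_factor a.
Proof.
move=> /andP[a0 a1]; have /andP[Ki0 Ki1] := invK_itv.
rewrite /miss_factor.
have -> : 1 - a + a / K = K^-1 + (1 - a) * (1 - K^-1) by ring.
by rewrite lerDl mulr_ge0 // subr_ge0 // ltW.
Qed.

Lemma hit_miss_factor a : hit_factor a + miss_factor a = 1 + K^-1.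
Proof. by rewrite /hit_factor /miss_factor; ring. Qed.

Lemma hedge_learner_hedges h x :
  hedges (hit_cost h x) (miss_cost h x) (hedge_learner h x).
Proof.
apply: xgetPex; apply: exists_hedging_dist => [|l|l]; first exact: ltnW.
  rewrite /hit_cost mulr_ge0_le0 ?mistake_rate_ge0 // ln_le0 //.
  by have /andP[] := hit_factor_itv (share_itv h x l).
have /andP[Ki0 _] := invK_itv.
have a01 := share_itv h x l.
have /andP[hit_ge _] := hit_factor_itv a01; have miss_ge := miss_factor_ge a01.
rewrite /hit_cost /miss_cost hedge_ineq //.
- exact: lt_le_trans Ki0 miss_ge.
- exact: lt_le_trans Ki0 hit_ge.
- by rewrite addrC hit_miss_factor.
Qed.

Lemma hedge_learner_valid : valid_learner hedge_learner.
Proof. by move=> h x; have [] := hedge_learner_hedges h x. Qed.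

Lemma weight_rcons_le j h e :
  weight j (rcons h e) <= if refutes j e then weight j h / K else weight j h.
Proof.
rewrite /weight /nrefuted -cats1 count_cat /= addn0.
case: (refutes j e); last by rewrite addn0.
rewrite addn1; case: (ltnP (count (refutes j) h) (budget m j)) => [lt_nB|le_Bn].
  rewrite (ltnW lt_nB) -(subnSK lt_nB) [K ^+ _.+1]exprS.
  by rewrite mulrC mulKf ?gt_eqF ?K_gt0.
by case: ifP => _; rewrite ?mul0r // divr_ge0 ?exprn_ge0 // ltW // K_gt0.
Qed.

Lemma potential_rcons_le h x yh y : 0 < potential h ->
  potential (rcons h (x, yh == y, yh)) <= potential h * shrink_factor h x yh y.
Proof.
move=> P0; apply: le_trans (ler_sum _ (fun j _ => weight_rcons_le j h _)) _.
rewrite (bigID (fun j => x j == yh)) /= /shrink_factor /share.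
move: P0; rewrite (potential_split h x yh).
set A := \sum_(j | x j == yh) _; set B := \sum_(j | x j != yh) _.
move=> AB0; rewrite /hit_factor /miss_factor.
case: (yh == y).
  under eq_bigr => j /eqP -> do rewrite eqxx /=.
  under [X in _ + X]eq_bigr => j /negPf -> do rewrite /=.
  rewrite -mulr_suml -/A -/B [leRHS](_ : _ = A + B / K) //.
  by field; rewrite natrk_neq0 gt_eqF.
under eq_bigr => j /eqP -> do rewrite eqxx /=.
under [X in _ + X]eq_bigr => j /negPf -> do rewrite /=.
rewrite -mulr_suml -/A -/B [leRHS](_ : _ = A / K + B) //.
by field; rewrite natrk_neq0 gt_eqF.
Qed.

Lemma nrefuted_le_count j h ys : agrees h ys ->
  (nrefuted j h <= count (fun e : inst k m * 'I_k => e.1 j != e.2)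
                        (zip [seq e.1.1 | e <- h] ys))%N.
Proof.
elim: h ys => [|[[x b] yh] h IH] [|y ys] //=.
rewrite /agrees /= eqSS => /andP[sz /andP[/eqP y_b ag]].
apply: leq_add; last by apply: IH; rewrite /agrees sz ag.
rewrite -y_b; case: (eqVneq y yh) => [->|ne_y] /=; first exact: leqnn.
by case: eqP => // ->; rewrite eq_sym ne_y.
Qed.

Lemma realizable_potential_ge1 h : realizable h -> 1 <= potential h.
Proof.
move=> [ys [ag /existsP[j err_j]]].
have {err_j}nj := leq_trans (nrefuted_le_count j ag) err_j.
rewrite /potential (bigD1 j) //= -[1]addr0 lerD //; last first.
  by apply: sumr_ge0 => i _; exact: weight_ge0.
by rewrite /weight nj exprn_ege1 // ltW // K_gt1.
Qed.

Lemma shrink_factor_gt0 h x yh y : 0 < shrink_factor h x yh y.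
Proof.
have /andP[Ki0 _] := invK_itv; have a01 := share_itv h x yh.
rewrite /shrink_factor; case: eqP => _; apply: lt_le_trans Ki0 _.
  by have /andP[] := hit_factor_itv a01.
exact: miss_factor_ge.
Qed.

Lemma shrink_factor_cost h x yh y :
  (yh != y)%:R + mistake_rate R k * ln (shrink_factor h x yh y) =
  if yh == y then hit_cost h x yh else miss_cost h x yh.
Proof.
by rewrite /shrink_factor /hit_cost /miss_cost; case: eqP; rewrite ?add0r.
Qed.

Lemma emistakes_hedge_learner_le (A : adversary R k m) T h :
  valid_adversary A -> realizable h ->
  emistakes hedge_learner A T h <= mistake_rate R k * ln (potential h).
Proof.
move=> vA; elim: T h => [|T IH] h rh /=.
  by rewrite mulr_ge0 ?mistake_rate_ge0 ?ln_ge0 ?realizable_potential_ge1.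
set x := advX A h; set p := hedge_learner h x.
have [q_dist q_real] := vA h x p (hedge_learner_valid h x).
have P0 := lt_le_trans ltr01 (realizable_potential_ge1 rh).
apply: hedging_round_le (hedge_learner_hedges h x) q_dist _ => yh y p_gt0 q_gt0.
have rh' := q_real rh yh y p_gt0 q_gt0.
have P0' := lt_le_trans ltr01 (realizable_potential_ge1 rh').
rewrite -shrink_factor_cost -addrA lerD2l; apply: le_trans (IH _ rh') _.
rewrite -mulrDr ler_wpM2l ?mistake_rate_ge0 // -lnM ?posrE ?shrink_factor_gt0 //.
by rewrite ler_ln ?posrE ?mulr_gt0 ?shrink_factor_gt0 // mulrC potential_rcons_le.
Qed.

Lemma potential_nil : potential [::] = Wm R k m.
Proof.
rewrite /potential /Wm; under [RHS]eq_bigr do rewrite exprM.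
rewrite -sum_exprn_budget; apply: eq_bigr => j _.
by rewrite /weight /nrefuted /= subn0.
Qed.

Lemma realizable_nil : has (fun a => 0 < a)%N m -> realizable (k:=k) (m:=m) [::].
Proof.
move=> m_pos; have n0 : (0 < nexp m)%N.
  by elim: m m_pos => //= a s IH /orP[/ltn_addr|/IH/ltn_addl].
by exists [::]; split => //; apply/existsP; exists (Ordinal n0).
Qed.

End Potential.

Theorem lemma4p8 (R : realType) (k : nat) (m : seq nat) :
  (2 <= k)%N -> has (fun a => 0 < a)%N m ->
  (Vopt R k m <= (k%:R * (ln (Wm R k m) / ln (bk R k)))%:E)%E.
Proof.
move=> k_gt1 m_pos; apply: ge_ereal_inf.
exists (ereal_sup [set w | exists (A : adversary R k m) (T : nat),
    valid_adversary A /\ w = (emistakes (@hedge_learner R k m) A T [::])%:E]).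
  by exists (@hedge_learner R k m); split => //; exact: hedge_learner_valid.
apply: ge_ereal_sup => _ [A [T [vA ->]]]; rewrite lee_fin.
apply: le_trans
  (emistakes_hedge_learner_le k_gt1 T vA (realizable_nil k m_pos)) _.
by rewrite potential_nil /mistake_rate mulrAC -mulrA.
Qed.
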